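(* Let $N\ge3$ and $p>0$. For each $1\le j\le N-1$ let $W^{(j)}$ be the unique solution in $L^2_c$ of $L_-W^{(j)}=U^{(j)}$. Then $$\langle U^{(j)},W^{(k)}\rangle_{L^2(\Gamma)}=0\ \ (j\ne k),\qquad \langle U^{(j)},W^{(j)}\rangle_{L^2(\Gamma)}>0 .$$ Moreover, the vectors $U^{(1)},\dots,U^{(N-1)}$ are pairwise orthogonal in $L^2(\Gamma)$, and so are the vectors $W^{(1)},\dots,W^{(N-1)}$.
   Context: Let $\Gamma$ be the star graph of $N$ half-lines joined at a single vertex, each edge parametrized by $x\in[0,\infty)$ with vertex at $x=0$. Functions are real-valued; $L^2(\Gamma)=\oplus_{j=1}^NL^2(\mathbb{R}^+)$ with $\langle F,G\rangle_{L^2(\Gamma)}=\sum_j\int_0^\infty f_jg_j\,dx$, and $H^2_\Gamma=\{\Psi\in\oplus_jH^2(\mathbb{R}^+):\psi_1(0)=\dots=\psi_N(0),\ \sum_j\psi_j'(0)=0\}$. Let $\phi(x)=\operatorname{sech}^{1/p}(px)$, $\Phi=\phi\,(1,\dots,1)^T$, $L^2_c=\{V\in L^2(\Gamma):\langle V,\Phi\rangle_{L^2(\Gamma)}=0\}$. $L_-=-\Delta+1-(p+1)\Phi^{2p}$ (componentwise) is self-adjoint on $L^2(\Gamma)$ with domain $H^2_\Gamma$, and its kernel is spanned by $\Phi$. For $k=1,\dots,N-1$ let $e_k\in\mathbb{R}^N$ have first $k$ entries $1$, $(k+1)$-th entry $-k$, other entries $0$, and $U^{(k)}=\phi'(x)e_k$;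 note $U^{(k)}\in L^2_c$. *)

From Stdlib Require Import Reals.
From Coquelicot Require Import Coquelicot.
Open Scope R_scope.

(* A function on the star graph with N edges: component i (0 <= i < N) is
   the function on the i-th half-line; only values at x >= 0 matter. *)
Definition graph_fun := nat -> R -> R.

Fixpoint sum_upto (n : nat) (f : nat -> R) : R :=
  match n with O => 0 | S m => sum_upto m f + f m end.

Definition int0inf (f : R -> R) : R :=
  RInt_gen f (at_point 0) (Rbar_locally p_infty).

Definition sq_int (f : R -> R) : Prop :=
  ex_RInt_gen (fun x => f x * f x) (at_point 0) (Rbar_locally p_infty).

Definition inner (N : nat) (F G : graph_fun) : R :=
  sum_upto N (fun i => int0inf (fun x => F i x * G i x)).

Definition phi (p x : R) : R := Rpower (/ cosh (p * x)) (/ p).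

Definition Phi (p : R) : graph_fun := fun _ x => phi p x.

(* e_k : first k entries 1, (k+1)-th entry -k (0-based index k), others 0 *)
Definition e_vec (k i : nat) : R :=
  if (i <? k)%nat then 1 else if (i =? k)%nat then - INR k else 0.

Definition U (p : R) (k : nat) : graph_fun :=
  fun i x => Derive (phi p) x * e_vec k i.

(* Domain H^2_Gamma: each component twice differentiable (represented as a
   function on R; only the restriction to [0,oo) matters), with the function
   and its first two derivatives square integrable on [0,oo), continuity at
   the vertex and the Kirchhoff condition sum_j psi_j'(0) = 0. *)
Definition in_H2Gamma (N : nat) (F : graph_fun) : Prop :=
  (forall i, (i < N)%nat ->
     (forall x, ex_derive (F i) x) /\
     (forall x, ex_derive (Derive (F i)) x) /\
     sq_int (F i) /\ sq_int (Derive (F i)) /\ sq_int (Derive (Derive (F i)))) /\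
  (forall i, (i < N)%nat -> F i 0 = F 0%nat 0) /\
  sum_upto N (fun i => Derive (F i) 0) = 0.

Definition in_L2c (N : nat) (p : R) (F : graph_fun) : Prop :=
  (forall i, (i < N)%nat -> sq_int (F i)) /\ inner N F (Phi p) = 0.

Definition Lminus (p : R) (F : graph_fun) : graph_fun :=
  fun i x => - Derive (Derive (F i)) x + F i x
             - (p + 1) * Rpower (phi p x) (2 * p) * F i x.

From Stdlib Require Import Reals Lra Lia FunctionalExtensionality Classical.
From Coquelicot Require Import Coquelicot.
Open Scope R_scope.

(* On each half-line [L_-] factors as [A^* A], where [A f = f' + tanh (p x) f] and
   [A^* g = - g' + tanh (p x) g], and every square-integrable solution of [L_- v = 0] is a
   multiple of [phi]: [(A v) phi] is constant, and it must vanish.  Applied to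
   [W_i - e_k(i) W_1], this together with the vertex conditions, the orthogonality to [Phi]
   and [sum_i e_k(i) = 0] gives [W^(k) = e_k w_k] with [w_k(0) = 0].  Every inner product
   of the statement is therefore [e_j . e_k] times a scalar integral, and [e_j . e_k = 0]
   for [j <> k].  On the diagonal, integration by parts gives
   [int_0^b phi' w = int_0^b (A w)^2 - w(b) (A w)(b)]; since [A w] does not vanish
   identically, a nonpositive [int phi' w] would keep [w (A w)] above a positive constant at
   infinity, which square-integrability of [w] and [w'] forbids. *)

Lemma continuous_Rplus (f g : R -> R) x :
  continuous f x -> continuous g x -> continuous (fun y => f y + g y) x.
Proof. apply (continuous_plus (V := R_NormedModule)). Qed.

Lemma continuous_Rmult (f g : R -> R) x :
  continuous f x -> continuous g x -> continuous (fun y => f y * g y) x.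
Proof. apply (continuous_mult (K := R_AbsRing)). Qed.

Lemma ex_derive_continuous_R (f : R -> R) (x : R) : ex_derive f x -> continuous f x.
Proof. apply (ex_derive_continuous (V := R_NormedModule)). Qed.

Lemma is_derive_eq (f : R -> R) (x l l' : R) : is_derive f x l -> l = l' -> is_derive f x l'.
Proof. now intros H <-. Qed.

Lemma is_derive_Rplus (f g : R -> R) (x df dg : R) :
  is_derive f x df -> is_derive g x dg -> is_derive (fun y => f y + g y) x (df + dg).
Proof. apply (is_derive_plus (V := R_NormedModule)). Qed.

Lemma is_derive_Rmult (f g : R -> R) (x df dg : R) :
  is_derive f x df -> is_derive g x dg -> is_derive (fun y => f y * g y) x (df * g x + f x * dg).
Proof. intros Hf Hg. apply (is_derive_mult f g); [exact Hf | exact Hg | apply Rmult_comm]. Qed.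

Lemma exp_le_exp x y : x <= y -> exp x <= exp y.
Proof. intros [H | ->]; [left; apply exp_increasing, H | right; reflexivity]. Qed.

Lemma eq_at_0_of_is_derive_0 (f : R -> R) : (forall x, 0 <= x -> is_derive f x 0) ->
  forall x, 0 <= x -> f x = f 0.
Proof.
  intros Hd x Hx. destruct (Req_dec x 0) as [-> | Hx0]; [reflexivity |].
  destruct (MVT_gen f 0 x (fun _ => 0)) as [c [_ Hc]]; [| | lra].
  - intros y Hy. apply Hd. rewrite Rmin_left in Hy by lra. lra.
  - intros y Hy. rewrite Rmin_left in Hy by lra. apply continuity_pt_filterlim, ex_derive_continuous_R.
    exists 0. apply Hd. lra.
Qed.

Lemma Derive_lin (f g : R -> R) (c : R) : (forall x, ex_derive f x) -> (forall x, ex_derive g x) ->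
  Derive (fun x => f x + c * g x) = fun x => Derive f x + c * Derive g x.
Proof.
  intros Hf Hg. apply functional_extensionality; intro x.
  apply is_derive_unique, is_derive_Rplus; [apply Derive_correct, Hf |].
  apply (is_derive_scal g x c), Derive_correct, Hg.
Qed.

Lemma ex_derive_lin (f g : R -> R) (c x : R) : ex_derive f x -> ex_derive g x ->
  ex_derive (fun y => f y + c * g y) x.
Proof.
  intros Hf Hg. apply (ex_derive_plus (V := R_NormedModule)); [exact Hf |].
  apply (ex_derive_scal g c x Hg).
Qed.

(** * The profile [phi] *)

Lemma cosh_pos x : 0 < cosh x.
Proof. unfold cosh. pose proof (exp_pos x). pose proof (exp_pos (- x)). lra. Qed.

Lemma cosh_ge_1 x : 1 <= cosh x.
Proof.
  unfold cosh. rewrite exp_Ropp. pose proof (exp_pos x).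
  assert (E : (exp x + / exp x) / 2 - 1 = (exp x - 1) ^ 2 / (2 * exp x)) by (field; lra).
  assert (0 <= (exp x - 1) ^ 2 / (2 * exp x)) by (apply Rdiv_le_0_compat; [apply pow2_ge_0 | lra]).
  lra.
Qed.

Lemma tanh_sq x : tanh x ^ 2 = 1 - / cosh x ^ 2.
Proof.
  unfold tanh, sinh, cosh. rewrite exp_Ropp. pose proof (exp_pos x).
  field. split; [lra|]. nra.
Qed.

Lemma tanh_sq_le_1 x : tanh x ^ 2 <= 1.
Proof.
  rewrite tanh_sq. pose proof (cosh_pos x).
  assert (0 < / cosh x ^ 2) by (apply Rinv_0_lt_compat; nra). lra.
Qed.

Lemma tanh_pos x : 0 < x -> 0 < tanh x.
Proof.
  intros Hx. unfold tanh, sinh. apply Rdiv_lt_0_compat; [|apply cosh_pos].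
  assert (exp (- x) < exp x) by (apply exp_increasing; lra). lra.
Qed.

Lemma is_derive_tanh_scal p x :
  is_derive (fun y => tanh (p * y)) x (p * (1 - tanh (p * x) ^ 2)).
Proof.
  rewrite tanh_sq. unfold tanh, sinh, cosh.
  pose proof (exp_pos (p * x)). pose proof (exp_pos (- (p * x))).
  auto_derive; [lra|]. rewrite exp_Ropp in *. field. split; nra.
Qed.

Lemma phi_exp p x : phi p x = exp (- (ln (cosh (p * x)) / p)).
Proof. unfold phi, Rpower. rewrite ln_Rinv by apply cosh_pos. f_equal. unfold Rdiv. ring. Qed.

Lemma phi_pos p x : 0 < phi p x.
Proof. rewrite phi_exp. apply exp_pos. Qed.

Lemma phi_0 p : phi p 0 = 1.
Proof. rewrite phi_exp, Rmult_0_r, cosh_0, ln_1. unfold Rdiv. rewrite Rmult_0_l, Ropp_0. apply exp_0. Qed.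

Lemma phi_le_1 p x : 0 < p -> phi p x <= 1.
Proof.
  intros Hp. rewrite phi_exp, <- exp_0. apply exp_le_exp.
  assert (0 <= ln (cosh (p * x))) by (rewrite <- ln_1; apply ln_le; [lra | apply cosh_ge_1]).
  assert (0 <= ln (cosh (p * x)) / p) by (apply Rdiv_le_0_compat; lra).
  lra.
Qed.

Lemma is_derive_phi p x : 0 < p -> is_derive (phi p) x (- tanh (p * x) * phi p x).
Proof.
  intros Hp.
  assert (E : phi p = fun y => exp (- (ln ((exp (p * y) + exp (- (p * y))) / 2) / p))).
  { apply functional_extensionality; intro y. apply phi_exp. }
  rewrite E at 1. pose proof (exp_pos (p * x)). pose proof (exp_pos (- (p * x))).
  auto_derive; [lra|]. rewrite phi_exp. unfold tanh, sinh, cosh, Rdiv. field. lra.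
Qed.

Lemma Derive_phi p : 0 < p -> Derive (phi p) = fun x => - tanh (p * x) * phi p x.
Proof.
  intros Hp. apply functional_extensionality; intro x.
  apply is_derive_unique, is_derive_phi, Hp.
Qed.

Lemma Rpower_phi p x : 0 < p -> Rpower (phi p x) (2 * p) = 1 - tanh (p * x) ^ 2.
Proof.
  intros Hp. unfold phi. rewrite Rpower_mult.
  replace (/ p * (2 * p)) with (INR 2) by (simpl; field; lra).
  rewrite Rpower_pow by (apply Rinv_0_lt_compat, cosh_pos).
  rewrite tanh_sq. pose proof (cosh_pos (p * x)). field. lra.
Qed.

Lemma continuous_phi p x : 0 < p -> continuous (phi p) x.
Proof. intros Hp. apply ex_derive_continuous_R. eexists. apply is_derive_phi, Hp. Qed.

Lemma continuous_Derive_phi p x : 0 < p -> continuous (Derive (phi p)) x.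
Proof.
  intros Hp. rewrite Derive_phi by exact Hp.
  apply continuous_Rmult; [| apply continuous_phi, Hp].
  apply ex_derive_continuous_R.
  apply (ex_derive_opp (V := R_NormedModule) (fun y => tanh (p * y))).
  eexists. apply is_derive_tanh_scal.
Qed.

(** * Improper integrals on [[0, +oo)] *)

Notation is_int0inf f l := (is_RInt_gen f (at_point 0) (Rbar_locally p_infty) l).

Notation ex_int0inf f := (ex_RInt_gen f (at_point 0) (Rbar_locally p_infty)).

Lemma ex_RInt_continuous_R (f : R -> R) a b : (forall x, continuous f x) -> ex_RInt f a b.
Proof. intros Hf. apply (ex_RInt_continuous (V := R_CompleteNormedModule)). auto. Qed.

Lemma RInt_Chasles_R (f : R -> R) a b c : (forall x, continuous f x) ->
  RInt f a b + RInt f b c = RInt f a c.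
Proof. intros Hf. apply (RInt_Chasles (V := R_CompleteNormedModule)); apply ex_RInt_continuous_R, Hf. Qed.

Lemma RInt_nonneg_mono (g : R -> R) b b' : (forall x, continuous g x) ->
  (forall x, 0 <= x -> 0 <= g x) -> 0 <= b <= b' -> RInt g 0 b <= RInt g 0 b'.
Proof.
  intros Hc Hg Hb. rewrite <- (RInt_Chasles_R g 0 b b') by exact Hc.
  assert (0 <= RInt g b b').
  { apply RInt_ge_0; [lra | apply ex_RInt_continuous_R, Hc |]. intros x Hx. apply Hg. lra. }
  lra.
Qed.

Lemma is_int0inf_RInt (f : R -> R) l : is_int0inf f l ->
  forall eps, 0 < eps -> exists M, forall b, M < b -> ex_RInt f 0 b /\ Rabs (RInt f 0 b - l) < eps.
Proof.
  intros Hf eps Heps.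
  destruct (Hf (fun y => Rabs (y - l) < eps)) as [Q P HQ [M HM] HQP].
  { exists (mkposreal eps Heps). auto. }
  exists M. intros b Hb. destruct (HQP 0 b HQ (HM b Hb)) as [y [Hy Hyl]]. simpl in Hy.
  split; [exists y; exact Hy |]. rewrite (is_RInt_unique _ _ _ _ Hy). exact Hyl.
Qed.

Lemma is_int0inf_intro (f : R -> R) l : (forall b, 0 <= b -> ex_RInt f 0 b) ->
  (forall eps, 0 < eps -> exists M, forall b, M < b -> Rabs (RInt f 0 b - l) < eps) ->
  is_int0inf f l.
Proof.
  intros Hex Hlim P [eps HP].
  destruct (Hlim eps (cond_pos eps)) as [M HM].
  apply Filter_prod with (fun a => a = 0) (fun b => Rmax M 0 < b); [reflexivity | now exists (Rmax M 0) |].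
  intros a b -> Hb. exists (RInt f 0 b). pose proof (Rmax_l M 0). pose proof (Rmax_r M 0). split.
  - apply (RInt_correct (V := R_CompleteNormedModule)), Hex. lra.
  - apply HP, HM. lra.
Qed.

Lemma RInt_le_is_int0inf (g h : R -> R) l : is_int0inf h l -> (forall x, continuous g x) ->
  (forall x, 0 <= x -> 0 <= g x <= h x) -> forall b, 0 <= b -> RInt g 0 b <= l.
Proof.
  intros Hh Hc Hgh b Hb. apply Rnot_lt_le. intro Hlt.
  destruct (is_int0inf_RInt h l Hh (RInt g 0 b - l)) as [M HM]; [lra |].
  set (b' := Rmax b M + 1). pose proof (Rmax_l b M). pose proof (Rmax_r b M).
  destruct (HM b') as [Hex Hclose]; [unfold b'; lra |].
  assert (RInt g 0 b <= RInt g 0 b').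
  { apply RInt_nonneg_mono; auto; [intros x Hx; apply Hgh, Hx | unfold b'; lra]. }
  assert (RInt g 0 b' <= RInt h 0 b').
  { apply RInt_le; auto; [unfold b'; lra | apply ex_RInt_continuous_R, Hc |].
    intros x Hx. apply Hgh. lra. }
  apply Rabs_def2 in Hclose. lra.
Qed.

(* The partial integrals of [g] increase and are bounded by those of [h]; their
   supremum is the improper integral. *)
Lemma ex_int0inf_le (g h : R -> R) : (forall x, continuous g x) ->
  (forall x, 0 <= x -> 0 <= g x <= h x) -> ex_int0inf h -> ex_int0inf g.
Proof.
  intros Hc Hgh [lh Hh].
  set (E := fun z => exists b, 0 <= b /\ z = RInt g 0 b).
  destruct (completeness E) as [S [HSub HSlub]].
  { exists lh. intros z [b [Hb ->]]. apply (RInt_le_is_int0inf g h); auto. }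
  { exists (RInt g 0 0), 0. split; [lra | reflexivity]. }
  exists S. apply is_int0inf_intro; [intros; apply ex_RInt_continuous_R, Hc |].
  intros eps Heps.
  assert (exists b0, 0 <= b0 /\ S - eps < RInt g 0 b0) as [b0 [Hb0 Hgb0]].
  { apply NNPP. intro Hn. assert (S <= S - eps); [| lra].
    apply HSlub. intros z [b [Hb ->]]. apply Rnot_lt_le. intro. apply Hn. now exists b. }
  exists b0. intros b Hb.
  assert (RInt g 0 b0 <= RInt g 0 b) by (apply RInt_nonneg_mono; auto; [intros x Hx; apply Hgh, Hx | lra]).
  assert (RInt g 0 b <= S) by (apply HSub; exists b; split; [lra | reflexivity]).
  apply Rabs_def1; lra.
Qed.

Lemma not_ex_int0inf_ge (H : R -> R) X eps : (forall x, continuous H x) ->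
  (forall x, 0 <= x -> 0 <= H x) -> 0 <= X -> 0 < eps -> (forall x, X <= x -> eps <= H x) ->
  ~ ex_int0inf H.
Proof.
  intros Hc Hpos HX Heps Hbig [l Hl].
  set (b := X + (Rabs l + 1) / eps).
  assert (Hq : 0 < (Rabs l + 1) / eps) by (apply Rdiv_lt_0_compat; [pose proof (Rabs_pos l) |]; lra).
  assert (RInt (fun _ => eps) X b <= RInt H X b).
  { apply RInt_le; [unfold b; lra | apply ex_RInt_const | apply ex_RInt_continuous_R, Hc |].
    intros x Hx. apply Hbig. lra. }
  rewrite RInt_const in H0. change (scal (b - X) eps) with ((b - X) * eps) in H0.
  replace ((b - X) * eps) with (Rabs l + 1) in H0 by (unfold b; field; lra).
  assert (0 <= RInt H 0 X).
  { apply RInt_ge_0; [lra | apply ex_RInt_continuous_R, Hc |]. intros x Hx. apply Hpos. lra. }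
  pose proof (RInt_Chasles_R H 0 X b Hc).
  assert (RInt H 0 b <= l).
  { apply (RInt_le_is_int0inf H H); auto; [intros x Hx; split; [apply Hpos, Hx | lra] | unfold b; lra]. }
  pose proof (Rle_abs l). lra.
Qed.

Lemma RInt_pos_eventually (Q : R -> R) x0 : (forall x, continuous Q x) ->
  (forall x, 0 <= x -> 0 <= Q x) -> 0 <= x0 -> 0 < Q x0 ->
  exists delta X, 0 < delta /\ forall b, X <= b -> delta <= RInt Q 0 b.
Proof.
  intros Hc Hpos Hx0 HQ.
  assert (Hnear : locally (Q x0) (fun z => Rabs (z - Q x0) < Q x0 / 2)).
  { assert (Hh : 0 < Q x0 / 2) by lra. now exists (mkposreal _ Hh). }
  destruct (Hc x0 _ Hnear) as [eta Heta].
  pose proof (cond_pos eta) as Heta0.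
  exists (RInt Q x0 (x0 + eta / 2)), (x0 + eta / 2). split.
  - apply RInt_gt_0; [lra | | intros; apply Hc].
    intros x Hx. assert (Hball : ball x0 eta x) by (change (Rabs (x - x0) < eta); apply Rabs_def1; lra).
    specialize (Heta x Hball). apply Rabs_def2 in Heta. lra.
  - intros b Hb.
    assert (0 <= RInt Q 0 x0)
      by (apply RInt_ge_0; [lra | apply ex_RInt_continuous_R, Hc | intros x Hx; apply Hpos; lra]).
    pose proof (RInt_Chasles_R Q 0 x0 (x0 + eta / 2) Hc).
    pose proof (RInt_nonneg_mono Q (x0 + eta / 2) b Hc Hpos). lra.
Qed.

Lemma is_int0inf_lin (f g : R -> R) lf lg a b : is_int0inf f lf -> is_int0inf g lg ->
  is_int0inf (fun x => a * f x + b * g x) (a * lf + b * lg).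
Proof.
  intros Hf Hg.
  apply (is_RInt_gen_plus (V := R_NormedModule) (fun x => scal a (f x)) (fun x => scal b (g x)));
    apply (is_RInt_gen_scal (V := R_NormedModule)); assumption.
Qed.

Lemma ex_int0inf_lin (f g : R -> R) a b : ex_int0inf f -> ex_int0inf g ->
  ex_int0inf (fun x => a * f x + b * g x).
Proof. intros [lf Hf] [lg Hg]. exists (a * lf + b * lg). apply is_int0inf_lin; assumption. Qed.

Lemma ex_int0inf_ext (f g : R -> R) : (forall x, f x = g x) -> ex_int0inf f -> ex_int0inf g.
Proof. apply (ex_RInt_gen_ext_eq (V := R_NormedModule)). Qed.

Lemma ex_int0inf_plus (f g : R -> R) : ex_int0inf f -> ex_int0inf g -> ex_int0inf (fun x => f x + g x).
Proof.
  intros If Ig. apply (ex_int0inf_ext (fun x => 1 * f x + 1 * g x)); [intros; ring |].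
  now apply ex_int0inf_lin.
Qed.

Lemma int0inf_lin (h f g : R -> R) a b : ex_int0inf f -> ex_int0inf g ->
  (forall x, 0 <= x -> h x = a * f x + b * g x) ->
  int0inf h = a * int0inf f + b * int0inf g.
Proof.
  intros Hf Hg Hh. unfold int0inf.
  apply (is_RInt_gen_unique (V := R_CompleteNormedModule)).
  apply (is_RInt_gen_ext (V := R_NormedModule) (fun x => a * f x + b * g x)).
  - apply Filter_prod with (fun x => x = 0) (fun y => 0 < y); [reflexivity | now exists 0 |].
    intros x y -> Hy z Hz. simpl in Hz. rewrite Rmin_left in Hz by lra. symmetry. apply Hh. lra.
  - apply is_int0inf_lin; apply (RInt_gen_correct (V := R_CompleteNormedModule)); assumption.
Qed.

(* [|f g| <= (f^2 + g^2) / 2] *)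
Lemma ex_int0inf_mult (f g : R -> R) : (forall x, continuous f x) -> (forall x, continuous g x) ->
  sq_int f -> sq_int g -> ex_int0inf (fun x => f x * g x).
Proof.
  intros Hf Hg If Ig.
  assert (Ifg : ex_int0inf (fun x => 1 * (f x * f x) + 1 * (g x * g x)))
    by (apply ex_int0inf_lin; assumption).
  assert (Ishift : ex_int0inf (fun x => f x * g x + (/ 2 * (f x * f x) + / 2 * (g x * g x)))).
  { apply (ex_int0inf_le _ _) with (3 := Ifg).
    - intros x. repeat first [apply continuous_Rplus | apply continuous_Rmult | apply continuous_const];
        auto.
    - intros x _. pose proof (pow2_ge_0 (f x + g x)). pose proof (pow2_ge_0 (f x - g x)). split; nra. }
  apply ex_int0inf_ext
    with (fun x => 1 * (f x * g x + (/ 2 * (f x * f x) + / 2 * (g x * g x)))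
                   + (- / 2) * (1 * (f x * f x) + 1 * (g x * g x))).
  - intros x. field.
  - apply ex_int0inf_lin; assumption.
Qed.

Lemma sq_int_lin (f g : R -> R) c : (forall x, continuous f x) -> (forall x, continuous g x) ->
  sq_int f -> sq_int g -> sq_int (fun x => f x + c * g x).
Proof.
  intros Hf Hg If Ig. unfold sq_int.
  apply ex_int0inf_ext
    with (fun x => 1 * (f x * f x) + 1 * (2 * c * (f x * g x) + c ^ 2 * (g x * g x))).
  - intros x. ring.
  - apply ex_int0inf_lin; [assumption |]. apply ex_int0inf_lin; [apply ex_int0inf_mult | ]; assumption.
Qed.

Lemma is_int0inf_exp a : 0 < a -> is_int0inf (fun x => exp (- (a * x))) (/ a).
Proof.
  intros Ha.
  assert (Hprim : forall b, is_RInt (fun x => exp (- (a * x))) 0 b (/ a - exp (- (a * b)) / a)).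
  { intros b.
    replace (/ a - exp (- (a * b)) / a) with (minus (- exp (- (a * b)) / a) (- exp (- (a * 0)) / a))
      by (unfold minus, plus, opp; simpl; rewrite Rmult_0_r, Ropp_0, exp_0; field; lra).
    apply (is_RInt_derive (V := R_CompleteNormedModule) (fun x => - exp (- (a * x)) / a)).
    - intros x _. auto_derive; [exact I | field; lra].
    - intros x _. apply ex_derive_continuous_R. auto_derive. exact I. }
  apply is_int0inf_intro; [intros b _; eexists; apply Hprim |].
  intros eps Heps. exists (Rabs (ln (eps * a)) / a). intros b Hb.
  rewrite (is_RInt_unique _ _ _ _ (Hprim b)).
  assert (Hab : a * (Rabs (ln (eps * a)) / a) < a * b) by (apply Rmult_lt_compat_l; lra).
  replace (a * (Rabs (ln (eps * a)) / a)) with (Rabs (ln (eps * a))) in Hab by (field; lra).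
  assert (exp (- (a * b)) < eps * a).
  { rewrite <- (exp_ln (eps * a)) by nra. apply exp_increasing.
    pose proof (Rabs_maj2 (ln (eps * a))). lra. }
  replace (/ a - exp (- (a * b)) / a - / a) with (- (exp (- (a * b)) / a)) by (field; lra).
  rewrite Rabs_Ropp, Rabs_pos_eq by (apply Rdiv_le_0_compat; [apply Rlt_le, exp_pos | lra]).
  apply (Rmult_lt_reg_r a); [lra |]. unfold Rdiv. rewrite Rmult_assoc, Rinv_l, Rmult_1_r by lra. lra.
Qed.

Lemma phi_sq_le_exp p x : 0 < p -> 0 <= x ->
  phi p x * phi p x <= exp (2 * ln 2 / p) * exp (- (2 * x)).
Proof.
  intros Hp Hx. rewrite phi_exp, <- !exp_plus.
  assert (Hc : exp (p * x) / 2 <= cosh (p * x)) by (unfold cosh; pose proof (exp_pos (- (p * x))); lra).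
  apply ln_le in Hc; [| pose proof (exp_pos (p * x)); lra].
  unfold Rdiv at 1 in Hc. rewrite ln_mult, ln_exp, ln_Rinv in Hc by (try apply exp_pos; lra).
  assert (E : 2 * ln 2 / p + - (2 * x) = - (2 * (p * x + - ln 2)) / p) by (field; lra).
  rewrite E. apply exp_le_exp. unfold Rdiv.
  assert (0 < / p) by (apply Rinv_0_lt_compat, Hp). nra.
Qed.

Lemma sq_int_phi p : 0 < p -> sq_int (phi p).
Proof.
  intros Hp. apply (ex_int0inf_le _ (fun x => exp (2 * ln 2 / p) * exp (- (2 * x)))).
  - intros x. apply continuous_Rmult; apply continuous_phi, Hp.
  - intros x Hx. pose proof (phi_pos p x). split; [nra | apply phi_sq_le_exp; assumption].
  - eexists. apply (is_RInt_gen_scal (V := R_NormedModule) (fun x => exp (- (2 * x)))).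
    apply is_int0inf_exp. lra.
Qed.

Lemma sq_int_Derive_phi p : 0 < p -> sq_int (Derive (phi p)).
Proof.
  intros Hp. apply (ex_int0inf_le _ (fun x => phi p x * phi p x)); [| | apply sq_int_phi, Hp].
  - intros x. apply continuous_Rmult; apply continuous_Derive_phi, Hp.
  - intros x _. rewrite Derive_phi by exact Hp.
    pose proof (tanh_sq_le_1 (p * x)). pose proof (phi_pos p x). split; nra.
Qed.

Lemma int0inf_phi_sq_pos p : 0 < p -> 0 < int0inf (fun x => phi p x * phi p x).
Proof.
  intros Hp.
  assert (Hc : forall x, continuous (fun y => phi p y * phi p y) x)
    by (intros x; apply continuous_Rmult; apply continuous_phi, Hp).
  assert (Hpos : forall x, 0 < phi p x * phi p x) by (intros x; pose proof (phi_pos p x); nra).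
  apply Rlt_le_trans with (RInt (fun x => phi p x * phi p x) 0 1).
  - apply RInt_gt_0; [lra | intros x _; apply Hpos | intros x _; apply Hc].
  - apply (RInt_le_is_int0inf _ (fun x => phi p x * phi p x)); [| exact Hc | | lra].
    + apply (RInt_gen_correct (V := R_CompleteNormedModule)), sq_int_phi, Hp.
    + intros x _. split; [left; apply Hpos | lra].
Qed.

(** * The operator [L_-] on one edge *)

Definition Lminus_edge (p : R) (f : R -> R) (x : R) : R :=
  - Derive (Derive f) x + f x - (p + 1) * Rpower (phi p x) (2 * p) * f x.

Definition Aop (p : R) (f : R -> R) (x : R) : R := Derive f x + tanh (p * x) * f x.

Lemma is_derive_Aop (p : R) (f : R -> R) (x : R) : 0 < p -> ex_derive f x -> ex_derive (Derive f) x ->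
  is_derive (Aop p f) x (tanh (p * x) * Aop p f x - Lminus_edge p f x).
Proof.
  intros Hp Hf Hf'. eapply is_derive_eq.
  - apply is_derive_Rplus; [apply Derive_correct, Hf' |].
    apply is_derive_Rmult; [apply is_derive_tanh_scal | apply Derive_correct, Hf].
  - unfold Aop, Lminus_edge. rewrite Rpower_phi by exact Hp. ring.
Qed.

Lemma continuous_Aop (p : R) (f : R -> R) (x : R) : 0 < p -> ex_derive f x -> ex_derive (Derive f) x ->
  continuous (Aop p f) x.
Proof. intros Hp Hf Hf'. apply ex_derive_continuous_R. eexists. apply is_derive_Aop; assumption. Qed.

Lemma Aop_sq_le (p : R) (f : R -> R) (x : R) :
  Aop p f x * Aop p f x <= 2 * (f x * f x + Derive f x * Derive f x).
Proof.
  unfold Aop. pose proof (tanh_sq_le_1 (p * x)).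
  pose proof (pow2_ge_0 (Derive f x - tanh (p * x) * f x)). pose proof (pow2_ge_0 (f x)). nra.
Qed.

Lemma mult_Aop_le (p : R) (f : R -> R) (x : R) :
  f x * Aop p f x <= 3 / 2 * (f x * f x + Derive f x * Derive f x).
Proof.
  pose proof (Aop_sq_le p f x). pose proof (pow2_ge_0 (f x - Aop p f x)).
  pose proof (Rle_0_sqr (Derive f x)). unfold Rsqr in *. nra.
Qed.

Lemma is_derive_mult_Aop (p : R) (f : R -> R) (x : R) : 0 < p -> ex_derive f x -> ex_derive (Derive f) x ->
  is_derive (fun y => f y * Aop p f y) x (Aop p f x * Aop p f x - f x * Lminus_edge p f x).
Proof.
  intros Hp Hf Hf'. eapply is_derive_eq.
  - apply is_derive_Rmult; [apply Derive_correct, Hf | apply is_derive_Aop; assumption].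
  - unfold Aop. ring.
Qed.

Lemma eq_phi_of_Aop_0 p (f : R -> R) : 0 < p -> (forall x, ex_derive f x) ->
  (forall x, 0 <= x -> Aop p f x = 0) -> forall x, 0 <= x -> f x = f 0 * phi p x.
Proof.
  intros Hp Hf HA.
  assert (Hquot : forall x, 0 <= x -> is_derive (fun y => f y / phi p y) x 0).
  { intros x Hx. pose proof (phi_pos p x). eapply is_derive_eq.
    - apply is_derive_div; [apply Derive_correct, Hf | apply is_derive_phi, Hp | lra].
    - transitivity (Aop p f x * phi p x / phi p x ^ 2); [unfold Aop; field; lra |].
      rewrite HA by exact Hx. field. lra. }
  intros x Hx. pose proof (eq_at_0_of_is_derive_0 _ Hquot x Hx) as E. cbv beta in E.
  rewrite phi_0, Rdiv_1 in E. pose proof (phi_pos p x).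
  rewrite <- E. field. lra.
Qed.

Lemma Lminus_edge_kernel (p : R) (f : R -> R) : 0 < p ->
  (forall x, ex_derive f x) -> (forall x, ex_derive (Derive f) x) ->
  sq_int f -> sq_int (Derive f) -> (forall x, 0 <= x -> Lminus_edge p f x = 0) ->
  forall x, 0 <= x -> f x = f 0 * phi p x.
Proof.
  intros Hp Hf Hf' If If' HL.
  assert (HM : forall x, 0 <= x -> Aop p f x * phi p x = Aop p f 0).
  { intros x Hx. rewrite <- (Rmult_1_r (Aop p f 0)), <- (phi_0 p).
    apply (eq_at_0_of_is_derive_0 (fun y => Aop p f y * phi p y)); [| exact Hx].
    intros y Hy. eapply is_derive_eq.
    - apply is_derive_Rmult; [apply is_derive_Aop; auto | apply is_derive_phi, Hp].
    - rewrite HL by exact Hy. ring. }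
  (* Since [phi <= 1], [|A f| >= |A f (0)|] on the half-line, which is not square-integrable
     unless [A f (0) = 0]. *)
  assert (HA0 : Aop p f 0 = 0).
  { apply NNPP; intro Hc. set (c := Aop p f 0) in *.
    assert (Hcc : 0 < c * c) by exact (Rsqr_pos_lt c Hc).
    apply (not_ex_int0inf_ge (fun x => f x * f x + Derive f x * Derive f x) 0 (c * c / 2));
      [| | lra | lra | | apply ex_int0inf_plus; assumption].
    - intros x. apply continuous_Rplus; apply continuous_Rmult; apply ex_derive_continuous_R; auto.
    - intros x _. pose proof (Rle_0_sqr (f x)). pose proof (Rle_0_sqr (Derive f x)). unfold Rsqr in *. lra.
    - intros x Hx. rewrite <- (HM x Hx).
      pose proof (Aop_sq_le p f x). pose proof (phi_pos p x). pose proof (phi_le_1 p x Hp).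
      assert (Aop p f x * Aop p f x * (phi p x * phi p x) <= Aop p f x * Aop p f x * 1)
        by (apply Rmult_le_compat_l; [apply Rle_0_sqr | nra]).
      nra. }
  apply eq_phi_of_Aop_0; auto. intros x Hx.
  pose proof (HM x Hx) as E. rewrite HA0 in E. pose proof (phi_pos p x).
  apply Rmult_integral in E. destruct E; lra.
Qed.

Lemma Lminus_edge_lin (p : R) (f g : R -> R) (c x : R) :
  (forall y, ex_derive f y) -> (forall y, ex_derive (Derive f) y) ->
  (forall y, ex_derive g y) -> (forall y, ex_derive (Derive g) y) ->
  Lminus_edge p (fun y => f y + c * g y) x = Lminus_edge p f x + c * Lminus_edge p g x.
Proof.
  intros Hf Hf' Hg Hg'. unfold Lminus_edge.
  rewrite (Derive_lin f g c), (Derive_lin (Derive f) (Derive g) c) by assumption. ring.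
Qed.

Lemma Lminus_edge_kernel_lin (p : R) (f g : R -> R) (c : R) : 0 < p ->
  (forall x, ex_derive f x) -> (forall x, ex_derive (Derive f) x) -> sq_int f -> sq_int (Derive f) ->
  (forall x, ex_derive g x) -> (forall x, ex_derive (Derive g) x) -> sq_int g -> sq_int (Derive g) ->
  (forall x, 0 <= x -> Lminus_edge p f x + c * Lminus_edge p g x = 0) ->
  forall x, 0 <= x -> f x + c * g x = (f 0 + c * g 0) * phi p x.
Proof.
  intros Hp Hf Hf' If If' Hg Hg' Ig Ig' HL.
  assert (C : forall h : R -> R, (forall x, ex_derive h x) -> forall x, continuous h x)
    by (intros h Hh x; apply ex_derive_continuous_R, Hh).
  apply (Lminus_edge_kernel p (fun y => f y + c * g y) Hp).
  - intros x. apply ex_derive_lin; auto.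
  - rewrite Derive_lin by assumption. intros x. apply ex_derive_lin; auto.
  - apply sq_int_lin; auto.
  - rewrite Derive_lin by assumption. apply sq_int_lin; auto.
  - intros x Hx. rewrite Lminus_edge_lin by assumption. apply HL, Hx.
Qed.

Lemma Aop_not_identically_0 (p : R) (u : R -> R) : 0 < p ->
  (forall x, ex_derive u x) -> (forall x, ex_derive (Derive u) x) ->
  (forall x, 0 <= x -> Lminus_edge p u x = Derive (phi p) x) ->
  exists x0, 0 <= x0 /\ Aop p u x0 <> 0.
Proof.
  intros Hp Hu Hu' HL. apply NNPP. intro Hn.
  assert (HA : forall x, 0 <= x -> Aop p u x = 0)
    by (intros x Hx; apply NNPP; intro; apply Hn; now exists x).
  assert (Hflat : is_derive (Aop p u) 1 0).
  { apply (is_derive_ext_loc (fun _ => 0)); [| apply (is_derive_const (V := R_NormedModule))].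
    assert (Hh : 0 < 1 / 2) by lra. exists (mkposreal _ Hh). intros t Ht.
    change (Rabs (t - 1) < 1 / 2) in Ht. apply Rabs_def2 in Ht. symmetry. apply HA. lra. }
  pose proof (is_derive_unique _ _ _ Hflat) as E.
  rewrite (is_derive_unique _ _ _ (is_derive_Aop p u 1 Hp (Hu 1) (Hu' 1))) in E.
  rewrite HA, HL, (Derive_phi p Hp) in E by lra.
  pose proof (tanh_pos (p * 1)). pose proof (phi_pos p 1). nra.
Qed.

Lemma RInt_Derive_phi_mult (p : R) (u : R -> R) (b : R) : 0 < p ->
  (forall x, ex_derive u x) -> (forall x, ex_derive (Derive u) x) ->
  (forall x, 0 <= x -> Lminus_edge p u x = Derive (phi p) x) -> 0 <= b ->
  RInt (fun x => Derive (phi p) x * u x) 0 b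
  = RInt (fun x => Aop p u x * Aop p u x) 0 b - (u b * Aop p u b - u 0 * Aop p u 0).
Proof.
  intros Hp Hu Hu' HL Hb.
  set (Q := fun x => Aop p u x * Aop p u x).
  assert (CQ : forall x, continuous Q x)
    by (intros x; apply continuous_Rmult; apply continuous_Aop; auto).
  assert (Cg : forall x, continuous (fun x => Q x - Derive (phi p) x * u x) x).
  { intros x. apply (continuous_minus (V := R_NormedModule)); [apply CQ |].
    apply continuous_Rmult; [apply continuous_Derive_phi, Hp | apply ex_derive_continuous_R, Hu]. }
  assert (Hprim : is_RInt (fun x => Q x - Derive (phi p) x * u x) 0 b (u b * Aop p u b - u 0 * Aop p u 0)).
  { apply (is_RInt_derive (V := R_CompleteNormedModule) (fun x => u x * Aop p u x)); [| intros; apply Cg].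
    intros x Hx. rewrite Rmin_left in Hx by exact Hb.
    eapply is_derive_eq; [apply is_derive_mult_Aop; auto |].
    unfold Q. rewrite HL by lra. ring. }
  pose proof (is_RInt_minus (V := R_NormedModule) _ _ 0 b _ _
    (RInt_correct (V := R_CompleteNormedModule) Q 0 b (ex_RInt_continuous_R Q 0 b CQ)) Hprim) as H.
  apply (is_RInt_ext (V := R_NormedModule)) with (g := fun x => Derive (phi p) x * u x) in H.
  - apply (is_RInt_unique (V := R_CompleteNormedModule)) in H. exact H.
  - intros x _. unfold minus, plus, opp. simpl. ring.
Qed.

Lemma int0inf_Derive_phi_mult_pos (p : R) (u : R -> R) : 0 < p ->
  (forall x, ex_derive u x) -> (forall x, ex_derive (Derive u) x) ->
  sq_int u -> sq_int (Derive u) -> u 0 = 0 ->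
  (forall x, 0 <= x -> Lminus_edge p u x = Derive (phi p) x) ->
  0 < int0inf (fun x => Derive (phi p) x * u x).
Proof.
  intros Hp Hu Hu' Iu Iu' Hu0 HL.
  assert (Cu : forall x, continuous u x) by (intros x; apply ex_derive_continuous_R, Hu).
  assert (Cu' : forall x, continuous (Derive u) x) by (intros x; apply ex_derive_continuous_R, Hu').
  destruct (Aop_not_identically_0 p u Hp Hu Hu' HL) as [x0 [Hx0 HAx0]].
  assert (CQ : forall x, continuous (fun y : R => Aop p u y * Aop p u y) x)
    by (intros x; apply continuous_Rmult; apply continuous_Aop; auto).
  destruct (RInt_pos_eventually _ x0 CQ (fun x _ => Rle_0_sqr (Aop p u x)) Hx0 (Rsqr_pos_lt _ HAx0))
    as [delta [X [Hdelta HX]]].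
  assert (Ig : is_int0inf (fun x => Derive (phi p) x * u x) (int0inf (fun x => Derive (phi p) x * u x))).
  { apply (RInt_gen_correct (V := R_CompleteNormedModule)).
    apply ex_int0inf_mult; [intros x; apply continuous_Derive_phi, Hp | exact Cu
                           | apply sq_int_Derive_phi, Hp | exact Iu]. }
  apply Rnot_le_lt. intro HJ.
  destruct (is_int0inf_RInt _ _ Ig (delta / 2)) as [M HM]; [lra |].
  set (X' := Rmax (Rmax M X) 0 + 1).
  assert (HX' : M < X' /\ X <= X' /\ 0 <= X').
  { unfold X'. pose proof (Rmax_l (Rmax M X) 0). pose proof (Rmax_r (Rmax M X) 0).
    pose proof (Rmax_l M X). pose proof (Rmax_r M X). lra. }
  apply (not_ex_int0inf_ge (fun x => u x * u x + Derive u x * Derive u x) X' (delta / 3));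
    [| | lra | lra | | apply ex_int0inf_plus; assumption].
  - intros x. apply continuous_Rplus; apply continuous_Rmult; auto.
  - intros x _. pose proof (Rle_0_sqr (u x)). pose proof (Rle_0_sqr (Derive u x)). unfold Rsqr in *. lra.
  - intros b Hb. destruct (HM b) as [_ Hclose]; [lra |].
    rewrite RInt_Derive_phi_mult, Hu0 in Hclose by (auto; lra).
    pose proof (HX b ltac:(lra)). pose proof (mult_Aop_le p u b).
    apply Rabs_def2 in Hclose. lra.
Qed.

(** * The vectors [e_k] *)

Lemma sum_upto_ext (n : nat) (f g : nat -> R) :
  (forall i, (i < n)%nat -> f i = g i) -> sum_upto n f = sum_upto n g.
Proof.
  induction n as [| n IH]; intros H; simpl; [reflexivity |].
  rewrite (H n) by lia. rewrite IH; [reflexivity |]. intros i Hi. apply H. lia.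
Qed.

Lemma sum_upto_plus (n : nat) (f g : nat -> R) :
  sum_upto n (fun i => f i + g i) = sum_upto n f + sum_upto n g.
Proof. induction n as [| n IH]; simpl; [ring | rewrite IH; ring]. Qed.

Lemma sum_upto_mult_r (n : nat) (f : nat -> R) (c : R) :
  sum_upto n (fun i => f i * c) = sum_upto n f * c.
Proof. induction n as [| n IH]; simpl; [ring | rewrite IH; ring]. Qed.

Lemma sum_upto_const (n : nat) (c : R) : sum_upto n (fun _ => c) = INR n * c.
Proof. induction n as [| n IH]; simpl sum_upto; [simpl; ring | rewrite IH, S_INR; ring]. Qed.

Lemma e_vec_lt (k i : nat) : (i < k)%nat -> e_vec k i = 1.
Proof. intros H. unfold e_vec. apply Nat.ltb_lt in H. now rewrite H. Qed.

Lemma e_vec_diag (k : nat) : e_vec k k = - INR k.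
Proof. unfold e_vec. now rewrite Nat.ltb_irrefl, Nat.eqb_refl. Qed.

Lemma e_vec_gt (k i : nat) : (k < i)%nat -> e_vec k i = 0.
Proof.
  intros H. unfold e_vec. destruct (Nat.ltb_spec i k); [lia |].
  destruct (Nat.eqb_spec i k); [lia | reflexivity].
Qed.

Lemma sum_upto_e_vec_map (n k : nat) (g : R -> R) : (k < n)%nat -> g 0 = 0 ->
  sum_upto n (fun i => g (e_vec k i)) = INR k * g 1 + g (- INR k).
Proof.
  intros Hk Hg0. induction n as [| n IH]; [lia |]. simpl sum_upto.
  destruct (Nat.eq_dec k n) as [-> | Hne].
  - rewrite e_vec_diag, <- sum_upto_const. f_equal.
    apply sum_upto_ext. intros i Hi. now rewrite e_vec_lt.
  - rewrite IH, e_vec_gt, Hg0 by lia. ring.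
Qed.

Lemma sum_e_vec (n k : nat) : (k < n)%nat -> sum_upto n (e_vec k) = 0.
Proof.
  intros Hk. change (sum_upto n (fun i => (fun y : R => y) (e_vec k i)) = 0).
  rewrite sum_upto_e_vec_map by (auto || reflexivity). ring.
Qed.

Lemma sum_e_vec_sq (n k : nat) : (k < n)%nat ->
  sum_upto n (fun i => e_vec k i * e_vec k i) = INR k * (INR k + 1).
Proof. intros Hk. rewrite (sum_upto_e_vec_map n k (fun y => y * y)) by (auto || ring). ring. Qed.

Lemma sum_e_vec_mult (n j k : nat) : j <> k -> (j < n)%nat -> (k < n)%nat ->
  sum_upto n (fun i => e_vec j i * e_vec k i) = 0.
Proof.
  (* For [j < k], [e_vec j i * e_vec k i = e_vec j i] for every [i]. *)
  assert (Hlt : forall j k, (j < k < n)%nat -> sum_upto n (fun i => e_vec j i * e_vec k i) = 0).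
  { intros j' k' Hjk. rewrite <- (sum_e_vec n j') by lia. apply sum_upto_ext. intros i _.
    destruct (Nat.lt_ge_cases i k');
      [rewrite (e_vec_lt k') by lia | rewrite (e_vec_gt j') by lia]; ring. }
  intros Hne Hj Hk. destruct (proj1 (Nat.lt_gt_cases j k) Hne).
  - apply Hlt. lia.
  - rewrite (sum_upto_ext n _ (fun i => e_vec k i * e_vec j i)) by (intros; ring). apply Hlt. lia.
Qed.

(** * Solutions of [L_- W = U^(k)] on the star graph *)

Lemma inner_e_vec (N j k : nat) (F G : graph_fun) (f g : R -> R) :
  (forall i x, (i < N)%nat -> 0 <= x -> F i x = e_vec j i * f x) ->
  (forall i x, (i < N)%nat -> 0 <= x -> G i x = e_vec k i * g x) ->
  (forall x, continuous f x) -> (forall x, continuous g x) -> sq_int f -> sq_int g ->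
  inner N F G = sum_upto N (fun i => e_vec j i * e_vec k i) * int0inf (fun x => f x * g x).
Proof.
  intros HF HG Cf Cg If Ig. pose proof (ex_int0inf_mult f g Cf Cg If Ig) as Ifg.
  unfold inner. rewrite <- sum_upto_mult_r. apply sum_upto_ext. intros i Hi.
  rewrite (int0inf_lin _ _ _ (e_vec j i * e_vec k i) 0 Ifg Ifg); [ring |].
  intros x Hx. rewrite HF, HG by assumption. ring.
Qed.

Lemma Lminus_solution_profile (N k : nat) (p : R) (W : graph_fun) : (1 <= k < N)%nat -> 0 < p ->
  in_H2Gamma N W -> in_L2c N p W ->
  (forall i x, (i < N)%nat -> 0 <= x -> Lminus p W i x = U p k i x) ->
  W 0%nat 0 = 0 /\ forall i x, (i < N)%nat -> 0 <= x -> W i x = e_vec k i * W 0%nat x.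
Proof.
  intros Hk Hp [Hreg [Hcont _]] [_ Horth] HL.
  set (a := W 0%nat 0).
  destruct (Hreg 0%nat ltac:(lia)) as [D0 [D0' [I0 [I0' _]]]].
  assert (Hsplit : forall i x, (i < N)%nat -> 0 <= x ->
            W i x = a * phi p x + e_vec k i * (W 0%nat x - a * phi p x)).
  { intros i x Hi Hx. destruct (Hreg i Hi) as [Di [Di' [Ii [Ii' _]]]].
    pose proof (Lminus_edge_kernel_lin p (W i) (W 0%nat) (- e_vec k i) Hp Di Di' Ii Ii' D0 D0' I0 I0')
      as Hker.
    rewrite (Hcont i Hi) in Hker. fold a in Hker.
    enough (W i x + - e_vec k i * W 0%nat x = (a + - e_vec k i * a) * phi p x) by lra.
    apply Hker; [| exact Hx]. intros y Hy.
    change (Lminus p W i y + - e_vec k i * Lminus p W 0%nat y = 0).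
    rewrite !HL by (lia || exact Hy). unfold U. rewrite (e_vec_lt k 0) by lia. ring. }
  assert (Ha : a = 0).
  { set (I := int0inf (fun x => W 0%nat x * phi p x)).
    set (T := int0inf (fun x => phi p x * phi p x)).
    assert (IW : ex_int0inf (fun x => W 0%nat x * phi p x)).
    { apply ex_int0inf_mult; [intros x; apply ex_derive_continuous_R, D0
                             | intros x; apply continuous_phi, Hp | exact I0 | apply sq_int_phi, Hp]. }
    unfold inner, Phi in Horth.
    rewrite (sum_upto_ext N _ (fun i => a * T + e_vec k i * (I - a * T))) in Horth.
    2: { intros i Hi. rewrite (int0inf_lin _ _ _ (a - e_vec k i * a) (e_vec k i) (sq_int_phi p Hp) IW).
         - unfold I, T. ring.
         - intros x Hx. rewrite Hsplit by assumption. ring. }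
    rewrite sum_upto_plus, sum_upto_const, sum_upto_mult_r, sum_e_vec in Horth by lia.
    assert (HT : 0 < T) by (apply int0inf_phi_sq_pos, Hp).
    assert (HN : 0 < INR N) by (apply lt_0_INR; lia).
    assert (E : a * (T * INR N) = 0) by lra.
    apply Rmult_integral in E. destruct E as [E | E]; [exact E | nra]. }
  split; [exact Ha |]. intros i x Hi Hx. rewrite Hsplit, Ha by assumption. ring.
Qed.

Theorem lemma5p3 (N : nat) (p : R) (HN : (3 <= N)%nat) (Hp : 0 < p)
  (W : nat -> graph_fun)
  (HW : forall j, (1 <= j <= N - 1)%nat ->
          in_H2Gamma N (W j) /\ in_L2c N p (W j) /\
          (forall i x, (i < N)%nat -> 0 <= x -> Lminus p (W j) i x = U p j i x)) :
  (forall j k, (1 <= j <= N - 1)%nat -> (1 <= k <= N - 1)%nat -> j <> k ->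
     inner N (U p j) (W k) = 0) /\
  (forall j, (1 <= j <= N - 1)%nat -> 0 < inner N (U p j) (W j)) /\
  (forall j k, (1 <= j <= N - 1)%nat -> (1 <= k <= N - 1)%nat -> j <> k ->
     inner N (U p j) (U p k) = 0) /\
  (forall j k, (1 <= j <= N - 1)%nat -> (1 <= k <= N - 1)%nat -> j <> k ->
     inner N (W j) (W k) = 0).
Proof.
  assert (HU : forall j i x, (i < N)%nat -> 0 <= x -> U p j i x = e_vec j i * Derive (phi p) x)
    by (intros; unfold U; ring).
  assert (Cphi' : forall x, continuous (Derive (phi p)) x) by (intros; apply continuous_Derive_phi, Hp).
  pose proof (sq_int_Derive_phi p Hp) as Iphi'.
  assert (Hprof : forall j, (1 <= j <= N - 1)%nat ->
    W j 0%nat 0 = 0 /\ forall i x, (i < N)%nat -> 0 <= x -> W j i x = e_vec j i * W j 0%nat x).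
  { intros j Hj. destruct (HW j Hj) as [H2 [Hc HL]]. apply (Lminus_solution_profile N j p); auto; lia. }
  assert (Hw : forall j, (1 <= j <= N - 1)%nat ->
    (forall x, continuous (W j 0%nat) x) /\ sq_int (W j 0%nat)).
  { intros j Hj. destruct (HW j Hj) as [[Hr _] _]. destruct (Hr 0%nat ltac:(lia)) as [D [_ [I _]]].
    split; [intros x; apply ex_derive_continuous_R, D | exact I]. }
  split; [| split; [| split]].
  - intros j k Hj Hk Hjk. destruct (Hw k Hk) as [Cw Iw].
    rewrite (inner_e_vec N j k _ _ _ _ (HU j) (proj2 (Hprof k Hk)) Cphi' Cw Iphi' Iw).
    rewrite sum_e_vec_mult by lia. ring.
  - intros j Hj. destruct (Hw j Hj) as [Cw Iw].
    rewrite (inner_e_vec N j j _ _ _ _ (HU j) (proj2 (Hprof j Hj)) Cphi' Cw Iphi' Iw), sum_e_vec_sq by lia.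
    assert (1 <= INR j) by (apply (le_INR 1); lia).
    apply Rmult_lt_0_compat; [nra |].
    destruct (HW j Hj) as [[Hr _] [_ HL]]. destruct (Hr 0%nat ltac:(lia)) as [D [D' [I [I' _]]]].
    apply int0inf_Derive_phi_mult_pos; [exact Hp | exact D | exact D' | exact I | exact I'
                                       | apply Hprof, Hj |].
    intros x Hx. change (Lminus p (W j) 0%nat x = Derive (phi p) x).
    rewrite HL, HU, (e_vec_lt j 0) by (lia || exact Hx). ring.
  - intros j k Hj Hk Hjk.
    rewrite (inner_e_vec N j k _ _ _ _ (HU j) (HU k) Cphi' Cphi' Iphi' Iphi'), sum_e_vec_mult by lia. ring.
  - intros j k Hj Hk Hjk. destruct (Hw j Hj) as [Cwj Iwj]. destruct (Hw k Hk) as [Cwk Iwk].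
    rewrite (inner_e_vec N j k _ _ _ _ (proj2 (Hprof j Hj)) (proj2 (Hprof k Hk)) Cwj Cwk Iwj Iwk).
    rewrite sum_e_vec_mult by lia. ring.
Qed.
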